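(* Let $G$ be a graph and $s:V(G)\to\mathbb{N}$ a function. Suppose that every correspondence-cover $(L^-,H^-)$ of $G$ with $|L^-(v)|=s(v)$ for all $v\in V(G)$ has a fractional packing. Then every correspondence-cover $(L,H)$ of $G$ with $|L(v)|\geq s(v)$ for all $v$ has a fractional packing. The same statement holds with ''correspondence-cover'' replaced by ''list-cover'' throughout. In particular, every correspondence-cover $(L,H)$ of $G$ with $|L(v)|\ge \chi_c^\bullet(G)$ for all $v$ has a fractional packing.
   Context: All graphs are finite and simple. A correspondence-cover of a graph $G$ is a pair $(L,H)$ where $H$ is a graph and $L$ maps each $v\in V(G)$ to a subset $L(v)\subseteq V(H)$ such that: the sets $L(v)$ partition $V(H)$; each $L(v)$ induces a clique in $H$; if $uv\notin E(G)$ there are no edges of $H$ between $L(u)$ and $L(v)$; if $uv\in E(G)$ the edges of $H$ between $L(u)$ and $L(v)$ form a matching. A list-cover is the correspondence-cover arising from a list-assignment $v\mapsto L(v)\subseteq\mathbb{N}$: vertices $(v,x)$ with $x\in L(v)$, cliques on each list, and edges $(u,x)(v,x)$ for every $uv\in E(G)$ and common color $x$. An independent transversal of $(L,H)$ is an independent set of $H$ containing exactly one vertex of each $L(v)$. A cover has a fractional packing if there is a probability distribution on independent transversals $I$ such that $\Pr(x\in I)=1/|L(v)|$ for every $v$ and every $x\in L(v)$ (lists need not all have the same size). $\chi_c^{\bullet}(G)$ is the least $k\ge1$ such that every correspondence-cover with all lists of size $k$ has a fractional packing. *)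

From HB Require Import structures.
From mathcomp Require Import all_boot all_order all_algebra.
From mathcomp Require Import reals.
Set Implicit Arguments. Unset Strict Implicit. Unset Printing Implicit Defensive.
Import Order.TTheory GRing.Theory Num.Theory.
Local Open Scope ring_scope.

Definition simple_rel (T : finType) (e : rel T) : Prop :=
  symmetric e /\ irreflexive e.

(* (L, H) is a correspondence-cover of the graph (V, adj); H = (T, h). *)
Definition corr_cover (V T : finType) (adj : rel V) (L : V -> {set T}) (h : rel T) : Prop :=
  simple_rel h /\
  (forall x : T, exists v, x \in L v) /\
  (forall u v (x : T), u != v -> x \in L u -> x \notin L v) /\
  (forall v (x y : T), x \in L v -> y \in L v -> x != y -> h x y) /\
  (forall u v (x y : T), u != v -> ~~ adj u v -> x \in L u -> y \in L v -> ~~ h x y) /\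
  (forall u v (x y y' : T), adj u v -> x \in L u -> y \in L v -> y' \in L v ->
      h x y -> h x y' -> y = y').

Definition indep_transversal (V T : finType) (L : V -> {set T}) (h : rel T) (I : {set T}) : Prop :=
  (forall x y, x \in I -> y \in I -> ~~ h x y) /\ (forall v, #|I :&: L v| = 1%N).

Definition frac_packing (R : realType) (V T : finType) (L : V -> {set T}) (h : rel T) : Prop :=
  exists p : {set T} -> R,
    (forall I, 0 <= p I) /\
    \sum_(I : {set T}) p I = 1 /\
    (forall I, 0 < p I -> indep_transversal L h I) /\
    (forall v x, x \in L v -> \sum_(I : {set T} | x \in I) p I = (#|L v|%:R)^-1).

Definition lc_vert (V : finType) (N : nat) (Lst : V -> {set 'I_N}) : finType :=
  {x : V * 'I_N | x.2 \in Lst x.1}.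

Definition lc_L (V : finType) (N : nat) (Lst : V -> {set 'I_N}) (v : V)
  : {set lc_vert Lst} := [set x : lc_vert Lst | (val x).1 == v].

Definition lc_h (V : finType) (adj : rel V) (N : nat) (Lst : V -> {set 'I_N})
  : rel (lc_vert Lst) :=
  fun x y => (((val x).1 == (val y).1) && (x != y))
             || (adj (val x).1 (val y).1 && ((val x).2 == (val y).2)).

Definition all_k_covers_pack (R : realType) (V : finType) (adj : rel V) (k : nat) : Prop :=
  forall (T : finType) (L : V -> {set T}) (h : rel T),
    corr_cover adj L h -> (forall v, #|L v| = k) -> frac_packing R L h.

Definition is_chi_c_bullet (R : realType) (V : finType) (adj : rel V) (k : nat) : Prop :=
  (1 <= k)%N /\ all_k_covers_pack R adj k /\
  (forall k', (1 <= k')%N -> (k' < k)%N -> ~ all_k_covers_pack R adj k').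

Arguments lc_L {V N} Lst v.
Arguments lc_h {V} adj {N} Lst x y.

From HB Require Import structures.
From mathcomp Require Import all_boot all_order all_algebra.
From mathcomp Require Import reals.
From mathcomp Require boolp.
Set Implicit Arguments. Unset Strict Implicit. Unset Printing Implicit Defensive.
Import Order.TTheory GRing.Theory Num.Theory.
Local Open Scope ring_scope.

(* Work with packings of the cover restricted to a set S of vertices of H, and
   induct on |S|.  If some list L(v0) :&: S has n > s(v0) elements, then for
   each x in it, S :\ x still satisfies the lower bounds; averaging the packings
   of the n sets S :\ x uniformly gives a packing of S, because a colour of
   L(v0) is then kept with probability (n-1)/n * 1/(n-1) = 1/n, while the other
   lists are untouched.  When all the bounds are tight, the restriction of the
   cover to S is itself a cover with list sizes exactly s. *)

Section PackingWithin.

Variables (R : realType) (V T : finType) (L : V -> {set T}) (h : rel T).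

Definition packing_within (S : {set T}) (p : {set T} -> R) : Prop :=
  [/\ forall I, 0 <= p I,
      \sum_(I : {set T}) p I = 1,
      forall I, 0 < p I -> indep_transversal L h I /\ I \subset S &
      forall v x, x \in L v :&: S ->
        \sum_(I : {set T} | x \in I) p I = (#|L v :&: S|%:R)^-1].

Definition frac_packing_within (S : {set T}) : Prop :=
  exists p, packing_within S p.

Lemma frac_packing_withinT : frac_packing_within setT -> frac_packing R L h.
Proof.
move=> [p [p_ge0 p_sum1 p_supp p_marg]]; exists p; split=> //; split=> //; split.
  by move=> J /p_supp [].
by move=> v x xL; rewrite -(setIT (L v)) (p_marg v) // setIT.
Qed.

Lemma packing_within_card_gt0 S p v :
  packing_within S p -> (0 < #|L v :&: S|)%N.
Proof.
move=> [p_ge0 p_sum1 p_supp _].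
have [|I /andP[_ /p_supp[[_ I_meets] I_sub]]] :=
  @psumr_neq0P _ _ predT p (fun I _ => p_ge0 I).
  by rewrite p_sum1; apply/eqP; rewrite oner_neq0.
by rewrite -(I_meets v) subset_leq_card // setIC setIS.
Qed.

Lemma packing_within_marginal_out S p x :
  packing_within S p -> x \notin S -> \sum_(I : {set T} | x \in I) p I = 0.
Proof.
move=> [p_ge0 _ p_supp _] xS; apply: big1 => I xI; apply/eqP.
rewrite eq_le p_ge0 andbT leNgt; apply/negP => /p_supp[_ /subsetP/(_ x xI)].
exact/negP.
Qed.

Hypothesis L_disjoint : forall u v x, u != v -> x \in L u -> x \notin L v.

Lemma setI_setD1_other S u v x :
  u != v -> x \in L u -> L v :&: (S :\ x) = L v :&: S.
Proof.
move=> uv xLu; apply/setP => y; rewrite !inE.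
by case: eqVneq => [->|] //=; rewrite (negbTE (L_disjoint uv xLu)).
Qed.

Lemma card_setI_setD1 (A S : {set T}) x :
  x \in A :&: S -> #|A :&: (S :\ x)| = #|A :&: S|.-1.
Proof. by rewrite setIDA (cardsD1 x (A :&: S)) => ->. Qed.

Lemma marginal_sum_setD1 S v0 (p : T -> {set T} -> R) v x :
  (forall y, y \in L v0 :&: S -> packing_within (S :\ y) (p y)) ->
  x \in L v :&: S ->
  \sum_(y in L v0 :&: S) \sum_(I : {set T} | x \in I) p y I
    = #|L v0 :&: S|%:R / #|L v :&: S|%:R.
Proof.
set A := L v0 :&: S => p_pack xLS.
have marg_other y : y \in A -> y != x ->
    \sum_(I : {set T} | x \in I) p y I = (#|L v :&: (S :\ y)|%:R)^-1.
  move=> yA yx; have [_ _ _ marg] := p_pack y yA; apply: marg.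
  by move: xLS; rewrite !inE eq_sym yx.
have yL0 y : y \in A -> y \in L v0 by rewrite inE => /andP[].
have [ev|vv0] := eqVneq v0 v.
  subst v.
  have n_pred_gt0 : (0 < #|A|.-1)%N.
    by rewrite -(card_setI_setD1 xLS) (packing_within_card_gt0 _ (p_pack x _)).
  rewrite (big_setD1 x) //= (packing_within_marginal_out (p_pack x xLS)) ?setD11 //.
  rewrite add0r (eq_bigr (fun=> (#|A|.-1%:R)^-1)); last first.
    move=> y /setD1P[yx yA].
    by rewrite marg_other // (card_setI_setD1 yA).
  have card_Ax : #|A :\ x| = #|A|.-1 by rewrite [in RHS](cardsD1 x A) xLS.
  rewrite sumr_const card_Ax -[_ *+ _]mulr_natr mulVf ?divff // pnatr_eq0 -lt0n //.
  exact: leq_trans n_pred_gt0 (leq_pred _).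
rewrite (eq_bigr (fun=> (#|L v :&: S|%:R)^-1)); last first.
  move=> y yA; rewrite marg_other ?(setI_setD1_other _ vv0) ?yL0 //.
  by apply: contraTneq xLS => <-; rewrite inE (negbTE (L_disjoint vv0 (yL0 y yA))).
by rewrite sumr_const mulr_natl.
Qed.

Lemma packing_within_average S v0 (p : T -> {set T} -> R) :
  (0 < #|L v0 :&: S|)%N ->
  (forall y, y \in L v0 :&: S -> packing_within (S :\ y) (p y)) ->
  packing_within S
    (fun I => (#|L v0 :&: S|%:R)^-1 * \sum_(y in L v0 :&: S) p y I).
Proof.
set A := L v0 :&: S => A_gt0 p_pack.
have nA_neq0 : (#|A|%:R : R) != 0 by rewrite pnatr_eq0 -lt0n.
split.
- move=> I; rewrite mulr_ge0 ?invr_ge0 ?ler0n // sumr_ge0 // => y yA.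
  by have [] := p_pack y yA.
- rewrite -big_distrr /= exchange_big /= (eq_bigr (fun=> 1)).
    by rewrite sumr_const -mulr_natr mul1r mulVf.
  by move=> y yA; have [] := p_pack y yA.
- move=> I; rewrite pmulr_rgt0 ?invr_gt0 ?ltr0n // => /lt0r_neq0/eqP.
  have p_ge0 y : y \in A -> 0 <= p y I by move=> yA; have [] := p_pack y yA.
  move=> /(psumr_neq0P p_ge0)[y /andP[yA p_gt0]].
  have [_ _ /(_ I p_gt0)[I_tr I_sub] _] := p_pack y yA.
  by split=> //; apply: subset_trans I_sub (subsetDl _ _).
move=> v x xLS; rewrite -big_distrr /= exchange_big /= (marginal_sum_setD1 p_pack xLS).
by rewrite mulrA mulVf ?mul1r.
Qed.

Lemma frac_packing_within_ge (s : V -> nat) :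
  (forall S, (forall v, #|L v :&: S| = s v) -> frac_packing_within S) ->
  forall S, (forall v, s v <= #|L v :&: S|)%N -> frac_packing_within S.
Proof.
move=> exact_pack S; have [n] := ubnP #|S|; elim: n S => // n IH S S_lt s_le.
have [/forallP tight|/forallPn[v0 v0_loose]] := boolP [forall v, #|L v :&: S| == s v].
  by apply: exact_pack => v; apply/eqP.
have s_lt : (s v0 < #|L v0 :&: S|)%N by rewrite ltn_neqAle eq_sym v0_loose s_le.
have pack_setD1 y : exists p, y \in L v0 :&: S -> packing_within (S :\ y) p.
  have [yA|] := boolP (y \in L v0 :&: S); last by exists (fun=> 0).
  have yL0 : y \in L v0 by move: yA; rewrite inE => /andP[].
  have [|v|p p_pack] := IH (S :\ y); last by exists p.
  - by move: S_lt; rewrite (cardsD1 y S); move: yA; rewrite inE => /andP[_ ->].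
  - have [<-|v0v] := eqVneq v0 v; last by rewrite (setI_setD1_other _ v0v).
    by rewrite card_setI_setD1 // -ltnS (ltn_predK s_lt).
have [p p_pack] := boolp.choice pack_setD1.
by eexists; apply: (packing_within_average (v0 := v0) _ p_pack); apply: leq_ltn_trans s_lt.
Qed.

End PackingWithin.

Lemma frac_packing_within_of_inj (R : realType) (V T T' : finType) (f : T' -> T)
    (L : V -> {set T}) (L' : V -> {set T'}) (h : rel T) (h' : rel T') (S : {set T}) :
  injective f -> {mono f : x y / h' x y >-> h x y} ->
  (forall v, f @: L' v = L v :&: S) -> (forall x, f x \in S) ->
  frac_packing R L' h' -> frac_packing_within R L h S.
Proof.
move=> f_inj f_mono f_L f_S [q [q_ge0 [q_sum1 [q_supp q_marg]]]].
exists (fun I => \sum_(I' : {set T'} | f @: I' == I) q I'); split.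
- by move=> I; apply: sumr_ge0.
- by rewrite -q_sum1 (partition_big (fun I' : {set T'} => f @: I') predT).
- move=> I /lt0r_neq0/eqP/psumr_neq0P[|I' /andP[/eqP<- /q_supp[I'_indep I'_meets]]].
    by move=> I' _; apply: q_ge0.
  split; last by apply/subsetP => _ /imsetP[x _ ->].
  split=> [_ _ /imsetP[x xI ->] /imsetP[y yI ->]|v]; first by rewrite f_mono I'_indep.
  rewrite -(setIidPl (_ : f @: I' \subset S)); last by apply/subsetP => _ /imsetP[x _ ->].
  by rewrite -setIA (setIC S) -f_L -imsetI ?card_imset // => x y _ _ /f_inj.
move=> v y; rewrite -f_L => /imsetP[x xL' ->].
rewrite card_imset // -(q_marg v x xL').
rewrite [RHS](partition_big (fun I' : {set T'} => f @: I') (fun I => f x \in I)) /=; last first.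
  by move=> I' xI'; apply: imset_f.
apply: eq_bigr => I fxI; apply: eq_bigl => I'.
case: eqP => [eI|_]; last by rewrite andbF.
by rewrite -eI (mem_imset _ _ f_inj) in fxI; rewrite fxI.
Qed.

Lemma corr_cover_preim (V T T' : finType) (adj : rel V) (L : V -> {set T})
    (h : rel T) (f : T' -> T) :
  injective f -> corr_cover adj L h ->
  corr_cover adj (fun v => f @^-1: L v) (relpre f h).
Proof.
move=> f_inj [[h_sym h_irr] [L_cov [L_disj [L_clique [L_nonadj L_match]]]]].
split; first by split=> [x y|x] /=; [apply: h_sym | apply: h_irr].
split=> [x|]; first by have [v xv] := L_cov (f x); exists v; rewrite inE.
split=> [u v x uv|]; first by rewrite !inE; apply: L_disj.
split=> [v x y|]; first by rewrite !inE -(inj_eq f_inj); apply: L_clique.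
split=> [u v x y uv uv_nadj|u v x y y' uv]; rewrite !inE; first exact: L_nonadj.
by move=> xu yv y'v hxy hxy'; apply: f_inj; apply: (L_match u v (f x)).
Qed.

Lemma corr_cover_packing_ge (R : realType) (V : finType) (adj : rel V) (s : V -> nat) :
  (forall (T : finType) (L : V -> {set T}) (h : rel T),
     corr_cover adj L h -> (forall v, #|L v| = s v) -> frac_packing R L h) ->
  forall (T : finType) (L : V -> {set T}) (h : rel T),
    corr_cover adj L h -> (forall v, (s v <= #|L v|)%N) -> frac_packing R L h.
Proof.
move=> exact_pack T L h L_cover s_le; apply: frac_packing_withinT.
have [_ [_ [L_disj _]]] := L_cover.
apply: (@frac_packing_within_ge R _ _ L h L_disj s) => [S L_S|v]; last by rewrite setIT.
pose f : {x | x \in S} -> T := val.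
have f_L v : f @: (f @^-1: L v) = L v :&: S.
  apply/setP => x; rewrite inE; apply/imsetP/andP => [[y]|[xv xS]].
    by rewrite inE => yv ->; split=> //; apply: valP.
  by exists (exist _ x xS); rewrite ?inE.
apply: (frac_packing_within_of_inj val_inj (h' := relpre f h) _ f_L) => //.
  exact: valP.
apply: exact_pack => [|v]; first exact: corr_cover_preim val_inj L_cover.
by rewrite -L_S -f_L card_imset //; apply: val_inj.
Qed.

Section ListCoverRestriction.

Variables (V : finType) (N : nat) (Lst : V -> {set 'I_N}).

Lemma lc_colour_inj v : {in lc_L Lst v &, injective (fun x : lc_vert Lst => (val x).2)}.
Proof.
move=> x y; rewrite !inE => /eqP xv /eqP yv cxy; apply: val_inj.
by move: xv yv cxy; case: (val x) => ? ?; case: (val y) => ? ? /= -> -> ->.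
Qed.

(* The list assignment whose list-cover is the restriction of the list-cover of Lst to S. *)
Definition lc_restrict (S : {set lc_vert Lst}) (v : V) : {set 'I_N} :=
  [set (val x).2 | x in lc_L Lst v :&: S].

Lemma card_lc_restrict S v : #|lc_restrict S v| = #|lc_L Lst v :&: S|.
Proof.
rewrite card_in_imset // => x y /setIP[xv _] /setIP[yv _].
exact: (lc_colour_inj xv yv).
Qed.

Lemma lc_restrictT v : lc_restrict setT v = Lst v.
Proof.
apply/setP => c; apply/imsetP/idP => [[x]|cv].
  by rewrite setIT inE => /eqP xv ->; rewrite -xv; apply: (valP x).
by exists (exist _ (v, c) cv); rewrite // setIT inE.
Qed.

Section Inclusion.

Variable S : {set lc_vert Lst}.

Lemma lc_restrict_sub (y : lc_vert (lc_restrict S)) : (val y).2 \in Lst (val y).1.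
Proof.
by have /imsetP[x] := valP y; rewrite !inE => /andP[/eqP xv _] ->; rewrite -xv; apply: (valP x).
Qed.

Definition lc_incl (y : lc_vert (lc_restrict S)) : lc_vert Lst :=
  exist _ (val y) (lc_restrict_sub y).

Lemma lc_incl_inj : injective lc_incl.
Proof. by move=> y z e; apply: val_inj; apply: (congr1 val e). Qed.

Lemma lc_incl_mem y : lc_incl y \in S.
Proof.
have /imsetP[x] := valP y; rewrite !inE => /andP[/eqP xy xS] cy.
suff -> : lc_incl y = x by [].
apply: val_inj; move: cy xy; rewrite /=; case: (val y) => u c /= -> <-.
by case: (val x).
Qed.

Lemma imset_lc_incl v : lc_incl @: lc_L (lc_restrict S) v = lc_L Lst v :&: S.
Proof.
apply/setP => x; rewrite inE; apply/imsetP/andP => [[y]|[xv xS]].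
  by rewrite inE => yv ->; split; [rewrite inE | apply: lc_incl_mem].
have cx : (val x).2 \in lc_restrict S (val x).1 by apply: imset_f; rewrite !inE eqxx.
by exists (exist _ (val x) cx); [move: xv; rewrite !inE | apply: val_inj].
Qed.

End Inclusion.

End ListCoverRestriction.

Lemma list_cover_packing_ge (R : realType) (V : finType) (adj : rel V) (s : V -> nat) :
  (forall (N : nat) (Lst : V -> {set 'I_N}),
     (forall v, #|Lst v| = s v) -> frac_packing R (lc_L Lst) (lc_h adj Lst)) ->
  forall (N : nat) (Lst : V -> {set 'I_N}),
    (forall v, (s v <= #|Lst v|)%N) -> frac_packing R (lc_L Lst) (lc_h adj Lst).
Proof.
move=> exact_pack N Lst s_le; apply: frac_packing_withinT.
have L_disj u v x : u != v -> x \in lc_L Lst u -> x \notin lc_L Lst v.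
  by move=> uv; rewrite !inE => /eqP->.
apply: (@frac_packing_within_ge R _ _ _ (lc_h adj Lst) L_disj s) => [S L_S|v].
  apply: (frac_packing_within_of_inj (@lc_incl_inj _ _ _ S) _ (imset_lc_incl S)).
  - by [].  (* lc_h only looks at the underlying (vertex, colour) pairs *)
  - exact: lc_incl_mem.
  by apply: exact_pack => v; rewrite card_lc_restrict.
by rewrite -card_lc_restrict lc_restrictT.
Qed.

Theorem mainTheorem10 (R : realType) (V : finType) (adj : rel V)
    (adj_sym : symmetric adj) (adj_irr : irreflexive adj) (s : V -> nat) :
  ((forall (T : finType) (L : V -> {set T}) (h : rel T),
       corr_cover adj L h -> (forall v, #|L v| = s v) -> frac_packing R L h) ->
   forall (T : finType) (L : V -> {set T}) (h : rel T),
       corr_cover adj L h -> (forall v, (s v <= #|L v|)%N) -> frac_packing R L h)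
  /\
  ((forall (N : nat) (Lst : V -> {set 'I_N}),
       (forall v, #|Lst v| = s v) -> frac_packing R (lc_L Lst) (lc_h adj Lst)) ->
   forall (N : nat) (Lst : V -> {set 'I_N}),
       (forall v, (s v <= #|Lst v|)%N) -> frac_packing R (lc_L Lst) (lc_h adj Lst))
  /\
  (forall k : nat, is_chi_c_bullet R adj k ->
   forall (T : finType) (L : V -> {set T}) (h : rel T),
       corr_cover adj L h -> (forall v, (k <= #|L v|)%N) -> frac_packing R L h).
Proof.
split; first exact: corr_cover_packing_ge.
split; first exact: list_cover_packing_ge.
move=> k [_ [k_pack _]].
exact: (@corr_cover_packing_ge R V adj (fun=> k) k_pack).
Qed.
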